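(* Let $d\ge2$ and let $\mathcal{G}$ be a stochastic subgroup of $\mathrm{O}(d^2)$. Then there exists a qplex $Q$ such that $\mathcal{G}\subseteq\mathcal{G}(Q)$ (in particular $RQ=Q$ for all $R\in\mathcal{G}$).
   Context: Fix an integer $d\ge 2$. $\mathrm{O}(d^2)$ is the group of real orthogonal $d^2\times d^2$ matrices. $\langle\cdot,\cdot\rangle$ is the standard inner product on $\mathbb{R}^{d^2}$, $\|\cdot\|$ the Euclidean norm. $\Delta=\{p\in\mathbb{R}^{d^2}: p(i)\ge0,\ \sum_ip(i)=1\}$; $H=\{u\in\mathbb{R}^{d^2}:\sum_i u(i)=1\}$; $c=(1/d^2,\dots,1/d^2)$. For $A\subseteq H$ the polar is $A^*=\{u\in H:\langle u,v\rangle\ge\frac{1}{d(d+1)}\ \forall v\in A\}$. Out-ball $B_{\rm o}=\{u\in H:\|u-c\|\le r_{\rm o}\}$, $r_{\rm o}^2=\frac{d-1}{d^2(d+1)}$. A qplex is a set $Q\subseteq\Delta\cap B_{\rm o}$ with $Q^*=Q$. A measurement is an array $r(i|j)\ge0$, $i,j\in\{1,\dots,d^2\}$, with $\sum_i r(i|j)=1$ for every $j$; for $q\in Q$, $q_r(i)=\sum_j[(d+1)q(j)-\frac1d]r(i|j)$; it is $Q$-preserving if $\{q_r:q\in Q\}=Q$; its stretched measurement matrix is $R_{ij}=(d+1)r(i|j)-\frac1d\sum_k r(i|k)$. The preservation group $\mathcal{G}(Q)$ is the set of stretched measurement matrices of $Q$-preserving measurements. A subgroup $\mathcal{G}\subseteq\mathrm{O}(d^2)$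 is stochastic if every $R\in\mathcal{G}$ satisfies $R_{ij}\ge-\frac1d$ for all $i,j$ and $Rc=c$. *)

From mathcomp Require Import all_boot.
From Stdlib Require Import Reals.
Set Implicit Arguments. Unset Strict Implicit. Unset Printing Implicit Defensive.
Local Open Scope R_scope.

Section QplexDefs.
Variable d : nat.

Definition N : nat := muln d d.
Definition dR : R := INR d.

Definition vec := 'I_N -> R.
Definition mat := 'I_N -> 'I_N -> R.

Definition Rsum (F : 'I_N -> R) : R := \big[Rplus/0]_(i < N) F i.

Definition inner (u v : vec) : R := Rsum (fun i => u i * v i).
Definition sqnorm (u : vec) : R := inner u u.

Definition inDelta (p : vec) : Prop := (forall i, 0 <= p i) /\ Rsum p = 1.
Definition inH (u : vec) : Prop := Rsum u = 1.

Definition cvec : vec := fun _ => 1 / (dR * dR).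

Definition polar (A : vec -> Prop) : vec -> Prop :=
  fun u => inH u /\ forall v, A v -> inner u v >= 1 / (dR * (dR + 1)).

Definition ro2 : R := (dR - 1) / (dR * dR * (dR + 1)).
Definition inBo (u : vec) : Prop :=
  inH u /\ sqnorm (fun i => u i - cvec i) <= ro2.

Definition qplex (Q : vec -> Prop) : Prop :=
  (forall u, Q u -> inDelta u /\ inBo u) /\
  (forall u, polar Q u <-> Q u).

(* measurements r(i|j) = r i j *)
Definition measurement (r : mat) : Prop :=
  (forall i j, 0 <= r i j) /\ (forall j, Rsum (fun i => r i j) = 1).

Definition q_r (r : mat) (q : vec) : vec :=
  fun i => Rsum (fun j => ((dR + 1) * q j - 1 / dR) * r i j).

Definition Q_preserving (Q : vec -> Prop) (r : mat) : Prop :=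
  forall p, (exists q, Q q /\ forall i, p i = q_r r q i) <-> Q p.

Definition stretched (r : mat) : mat :=
  fun i j => (dR + 1) * r i j - 1 / dR * Rsum (fun k => r i k).

Definition in_presgroup (Q : vec -> Prop) (S : mat) : Prop :=
  exists r, measurement r /\ Q_preserving Q r /\
            forall i j, S i j = stretched r i j.

Definition mmul (A B : mat) : mat :=
  fun i j => Rsum (fun k => A i k * B k j).
Definition idm : mat := fun i j => if i == j then 1 else 0.
Definition mapply (A : mat) (v : vec) : vec :=
  fun i => Rsum (fun j => A i j * v j).
Definition mat_eq (A B : mat) : Prop := forall i j, A i j = B i j.

Definition orthogonal (A : mat) : Prop :=
  forall i j, Rsum (fun k => A k i * A k j) = idm i j.

Definition subgroup_O (G : mat -> Prop) : Prop :=
  (forall A, G A -> orthogonal A) /\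
  G idm /\
  (forall A B, G A -> G B -> G (mmul A B)) /\
  (forall A, G A -> exists B, G B /\ mat_eq (mmul B A) idm).

Definition stochastic (G : mat -> Prop) : Prop :=
  forall A, G A ->
    (forall i j, A i j >= - (1 / dR)) /\
    (forall i, mapply A cvec i = cvec i).

End QplexDefs.

(* Zorn's lemma gives a maximal set K that contains the in-ball B_i and the G-orbits of the
   vertices (1/d at one coordinate, 1/(d(d+1)) elsewhere), lies in Delta and B_o, has pairwise
   inner products at least 1/(d(d+1)), and is G-invariant; such a K lies in its own polar.
   Conversely, let u be in the polar. A point x of the polar with <x, T x> >= 1/(d(d+1)) for
   all T in G can be added to K with its orbit, so x is in K by maximality. For the homothetic
   images x_t = c + t (u - c) one has <x_t, T x_t> - 1/d^2 = t^2 (<u, T u> - 1/d^2) while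
   <u, T x_t> - 1/d^2 = t (<u, T u> - 1/d^2); hence the ratios t with x_t in K contain 1/(d+1)
   and are closed under square roots, which forces <u, T u> >= 1/(d(d+1)) and so u in K.
   Finally every R in G is the stretched matrix of the measurement (R + 1/d)/(d+1), which acts
   on H as R and therefore preserves the G-invariant qplex K. *)

From Pilot Require Import Defs.
From HB Require Import structures.
From mathcomp Require Import all_boot boolp classical_sets.
From Stdlib Require Import Reals Lra FunctionalExtensionality Classical.
Set Implicit Arguments. Unset Strict Implicit. Unset Printing Implicit Defensive.
Local Open Scope R_scope.

Lemma Rplus_associative : associative Rplus. Proof. by move=> *; ring. Qed.
HB.instance Definition _ :=
  Monoid.isComLaw.Build R 0 Rplus Rplus_associative Rplus_comm Rplus_0_l.

Section Sums.
Variable d : nat.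
Implicit Types (F H : vec d) (a : R).

Lemma eq_Rsum F H : (forall i, F i = H i) -> Rsum F = Rsum H.
Proof. by move=> eFH; apply: eq_bigr. Qed.

Lemma Rsum_add F H : Rsum (fun i => F i + H i) = Rsum F + Rsum H.
Proof. by rewrite /Rsum big_split. Qed.

Lemma Rsum_mull a F : Rsum (fun i => a * F i) = a * Rsum F.
Proof. by rewrite /Rsum; elim/big_rec2: _ => [|i x y _ ->]; ring. Qed.

Lemma Rsum_mulr a F : Rsum (fun i => F i * a) = Rsum F * a.
Proof. by rewrite /Rsum; elim/big_rec2: _ => [|i x y _ ->]; ring. Qed.

Lemma Rsum_sub F H : Rsum (fun i => F i - H i) = Rsum F - Rsum H.
Proof.
have -> : Rsum F - Rsum H = Rsum F + -1 * Rsum H by ring.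
by rewrite -Rsum_mull -Rsum_add; apply: eq_Rsum => i; ring.
Qed.

Lemma Rsum_const a : Rsum (fun _ : 'I_(Defs.N d) => a) = dR d * dR d * a.
Proof.
rewrite /Rsum big_const_ord /dR -mult_INR multE -[muln d d]/(Defs.N d).
by elim: (Defs.N d) => [|n IH]; rewrite ?iterS ?S_INR ?IH /=; ring.
Qed.

Lemma Rsum_delta (k : 'I_(Defs.N d)) a : Rsum (fun j => if j == k then a else 0) = a.
Proof. by rewrite /Rsum (bigD1 k) //= eqxx big1 => [|j /negbTE ->]; ring. Qed.

Lemma Rsum_swap (F : 'I_(Defs.N d) -> 'I_(Defs.N d) -> R) :
  Rsum (fun i => Rsum (fun j => F i j)) = Rsum (fun j => Rsum (fun i => F i j)).
Proof. exact: exchange_big. Qed.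

Lemma Rsum_ge0 F : (forall i, 0 <= F i) -> 0 <= Rsum F.
Proof.
by move=> F0; rewrite /Rsum; elim/big_rec: _ => [|i x _ hx]; [lra | have := F0 i; lra].
Qed.

Lemma Rsum_ge_term F j : (forall i, 0 <= F i) -> F j <= Rsum F.
Proof.
move=> F0; rewrite /Rsum (bigD1 j) //=.
set rest := (X in _ <= _ + X); suff : 0 <= rest by lra.
by rewrite /rest; elim/big_rec: _ => [|i x _ hx]; [lra | have := F0 i; lra].
Qed.

End Sums.

Section LinearAlgebra.
Variable d : nat.
Implicit Types (x y u v : vec d) (A B : mat d).

Lemma inner_sym x y : inner x y = inner y x.
Proof. by apply: eq_Rsum => i; ring. Qed.

Lemma eq_inner x x' y y' :
  (forall i, x i = x' i) -> (forall i, y i = y' i) -> inner x y = inner x' y'.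
Proof. by move=> ex ey; apply: eq_Rsum => i; rewrite ex ey. Qed.

Lemma inner_linl a b x y v :
  inner (fun i => a * x i + b * y i) v = a * inner x v + b * inner y v.
Proof. by rewrite /inner -!Rsum_mull -Rsum_add; apply: eq_Rsum => i; ring. Qed.

Lemma inner_cvecl v : inner (@cvec d) v = Rsum v / (dR d * dR d).
Proof. by rewrite /inner /Rdiv -Rsum_mulr; apply: eq_Rsum => i; rewrite /cvec /Rdiv; ring. Qed.

Lemma sqnorm_ge0 x : 0 <= sqnorm x.
Proof. by apply: Rsum_ge0 => i; apply: Rle_0_sqr. Qed.

Lemma eq_mapply A x y i : (forall j, x j = y j) -> mapply A x i = mapply A y i.
Proof. by move=> exy; apply: eq_Rsum => j; rewrite exy. Qed.

Lemma mapply_linr A a b x y i :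
  mapply A (fun j => a * x j + b * y j) i = a * mapply A x i + b * mapply A y i.
Proof. by rewrite /mapply -!Rsum_mull -Rsum_add; apply: eq_Rsum => j; ring. Qed.

Lemma mapply_mmul A B x : mapply (mmul A B) x = mapply A (mapply B x).
Proof.
apply: functional_extensionality => i; rewrite /mapply /mmul.
under eq_Rsum => j do rewrite -Rsum_mulr.
rewrite Rsum_swap; apply: eq_Rsum => k; rewrite -Rsum_mull.
by apply: eq_Rsum => j; ring.
Qed.

Lemma mapply_idm x : mapply (@idm d) x = x.
Proof.
apply: functional_extensionality => i; rewrite -(Rsum_delta i (x i)).
by apply: eq_Rsum => j; rewrite /idm eq_sym; case: eqP => [->|_]; ring.
Qed.

Definition tapply A x : vec d := fun j => Rsum (fun k => A k j * x k).

Lemma inner_mapplyl A x y : inner (mapply A x) y = inner x (tapply A y).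
Proof.
rewrite /inner /mapply /tapply.
under eq_Rsum => i do rewrite -Rsum_mulr.
rewrite Rsum_swap; apply: eq_Rsum => j; rewrite -Rsum_mull.
by apply: eq_Rsum => i; ring.
Qed.

Lemma tapply_orthogonal A x : orthogonal A -> tapply A (mapply A x) = x.
Proof.
move=> oA; apply: functional_extensionality => j; rewrite /tapply /mapply.
under eq_Rsum => k do rewrite -Rsum_mull.
rewrite Rsum_swap -(Rsum_delta j (x j)); apply: eq_Rsum => l.
transitivity (idm j l * x l).
  by rewrite -oA -Rsum_mulr; apply: eq_Rsum => k; ring.
by rewrite /idm eq_sym; case: eqP => [->|_]; ring.
Qed.

Lemma orthogonal_inner A x y :
  orthogonal A -> inner (mapply A x) (mapply A y) = inner x y.
Proof. by move=> oA; rewrite inner_mapplyl tapply_orthogonal. Qed.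

End LinearAlgebra.

Lemma inner_ge_opp d (a b : vec d) p q g :
  sqnorm a <= p -> sqnorm b <= q -> 0 < g -> g * g = p * q -> inner a b >= - g.
Proof.
move=> ap bq g0 epq.
have p0 : 0 < p.
  have := sqnorm_ge0 a; have := sqnorm_ge0 b => a0 b0.
  by apply: Rnot_le_lt => p0; nra.
set l := g / p.
have l0 : 0 < l by apply: Rdiv_lt_0_compat.
have ll : l * l * p = q.
  by rewrite /l; apply: (Rmult_eq_reg_r p); [rewrite -[q * p]Rmult_comm -epq; field|]; lra.
have : 0 <= l * l * sqnorm a + 2 * l * inner a b + sqnorm b.
  rewrite (_ : _ + _ = sqnorm (fun i => l * a i + b i)); first exact: sqnorm_ge0.
  by rewrite /sqnorm /inner -!Rsum_mull -!Rsum_add; apply: eq_Rsum => i; ring.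
have : l * l * sqnorm a <= l * l * p by apply: Rmult_le_compat_l; nra.
have lg : l * g = q by rewrite -ll /l; field; lra.
nra.
Qed.

Lemma sqrt_closed_ub_ge1 (P : R -> Prop) t0 b :
  0 < t0 -> P t0 -> (forall t, P t -> 0 <= t) -> (forall t, P t -> P (sqrt t)) ->
  (forall t, P t -> t <= b) -> 1 <= b.
Proof.
move=> t0_gt0 Pt0 P_ge0 P_sqrt P_le; apply: Rnot_lt_le => b_lt1.
have b_gt0 : 0 < b by have := P_le t0 Pt0; lra.
have P_le_pow m : forall t, P t -> t <= b ^ expn 2 m.
  elim: m => [|m IH] t Pt; first by rewrite expn0 /= Rmult_1_r; exact: P_le.
  rewrite -(sqrt_sqrt t (P_ge0 t Pt)) expnS mul2n -addnn -plusE pow_add.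
  by have := IH _ (P_sqrt t Pt); have := sqrt_pos t; move=> *; apply: Rmult_le_compat.
have [M powM] := pow_lt_1_zero b ltac:(rewrite Rabs_right; lra) t0 t0_gt0.
have := powM (expn 2 M) ltac:(apply/leP; apply: ltnW; by apply: ltn_expl).
have := P_le_pow M t0 Pt0; have := pow_le b (expn 2 M) (Rlt_le _ _ b_gt0).
by move=> pow_ge0 t0_le; rewrite Rabs_right; lra.
Qed.

Local Open Scope classical_set_scope.

Lemma Zorn_bigcup_above T (P : set (set T)) (A0 : set T) :
  A0 !=set0 -> P A0 ->
  (forall F : set (set T), F !=set0 -> F `<=` P -> total_on F subset ->
     P (\bigcup_(X in F) X)) ->
  exists A, [/\ P A, A0 `<=` A & forall B, P B -> A `<=` B -> B `<=` A].
Proof.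
move=> [x0 A0x0] PA0 P_chain.
pose Q X := (P X /\ A0 `<=` X) \/ X = set0.
have [A [QA maxA]] : exists A, Q A /\ forall B, A `<` B -> ~ Q B.
  apply: Zorn_bigcup => F FQ Ftot.
  pose F' := F `&` [set X | P X /\ A0 `<=` X].
  have bigcupF : \bigcup_(X in F) X = \bigcup_(X in F') X.
    apply/seteqP; split=> y [Y FY Yy]; last by exists Y => //; case: FY.
    by case: (FQ Y FY) => [QY | Y0]; [exists Y | move: Yy; rewrite Y0].
  have [[X [FX [PX A0X]]] | noF'] := pselect (F' !=set0).
    left; rewrite bigcupF; split; last by move=> y /A0X Xy; exists X.
    apply: P_chain; [by exists X | by move=> Y [_ []] | ].
    by move=> Y Z [FY _] [FZ _]; apply: Ftot.
  right; rewrite bigcupF; apply/seteqP; split=> y // [Y F'Y _].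
  by case: noF'; exists Y.
case: QA => [[PA A0A] | A_set0].
  exists A; split=> // B PB AB; apply: contrapT => BA.
  by apply: (maxA B); [split | left; split=> //; apply: subset_trans AB].
exfalso; apply: (maxA A0); last by left; split.
by rewrite A_set0; split; [exact: sub0set | move=> /(_ x0 A0x0)].
Qed.

Section Qplex.
Variable d : nat.
Hypothesis hd : (2 <= d)%nat.
Local Notation c := (@cvec d).
Local Notation alpha := (1 / (dR d * (dR d + 1))).
Implicit Types (b u v x y : vec d).

Lemma dR_ge2 : 2 <= dR d.
Proof. by apply: (le_INR 2); apply/leP. Qed.

Lemma dR_sqr_ge4 : 4 <= dR d * dR d.
Proof. by have := dR_ge2; nra. Qed.

Definition centered x : vec d := fun i => x i - cvec i.

(* The in-ball B_i, of squared radius r_i^2 = 1/(d^2(d^2-1)); since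
   r_i r_o = 1/d^2 - 1/(d(d+1)), B_i and B_o are polar to each other. *)
Definition ri2 : R := 1 / (dR d * dR d * (dR d * dR d - 1)).
Definition inBi x : Prop := inH x /\ sqnorm (centered x) <= ri2.

Lemma ri2_gt0 : 0 < ri2.
Proof.
have d4 := dR_sqr_ge4.
by apply: Rdiv_lt_0_compat; [lra | apply: Rmult_lt_0_compat; lra].
Qed.

Lemma ro2_gt0 : 0 < ro2 d.
Proof. have := dR_ge2; rewrite /ro2 => d2; apply: Rdiv_lt_0_compat; nra. Qed.

Lemma ri2_le_ro2 : ri2 <= ro2 d.
Proof.
have d2 := dR_ge2; rewrite /ri2 /ro2.
have -> : (dR d - 1) / (dR d * dR d * (dR d + 1)) =
          ((dR d - 1) * (dR d - 1)) / (dR d * dR d * (dR d * dR d - 1)).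
  by field; split; nra.
have d4 := dR_sqr_ge4.
apply: Rmult_le_compat_r; last nra.
by apply/Rlt_le/Rinv_0_lt_compat/Rmult_lt_0_compat; lra.
Qed.

Lemma gap_gt0 : 0 < 1 / (dR d * dR d) - alpha.
Proof.
have d2 := dR_ge2.
have -> : 1 / (dR d * dR d) - alpha = 1 / (dR d * dR d * (dR d + 1)) by field; lra.
apply: Rdiv_lt_0_compat; nra.
Qed.

Lemma gap_sqr : (1 / (dR d * dR d) - alpha) * (1 / (dR d * dR d) - alpha) = ro2 d * ri2.
Proof. by have := dR_ge2; rewrite /ro2 /ri2 => d2; field; split; nra. Qed.

Lemma cvec_sum : Rsum c = 1.
Proof. by have := dR_ge2; rewrite /cvec Rsum_const => d2; field; lra. Qed.

Lemma centered_sum x : inH x -> Rsum (centered x) = 0.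
Proof. by move=> Hx; rewrite /centered Rsum_sub Hx cvec_sum; ring. Qed.

Lemma inner_centered x y :
  inH x -> inH y -> inner x y = 1 / (dR d * dR d) + inner (centered x) (centered y).
Proof.
move=> Hx Hy; have d2 := dR_ge2.
have -> : inner (centered x) (centered y) = inner x y - inner c y - inner c x + inner c c.
  by rewrite /inner -!Rsum_sub -Rsum_add; apply: eq_Rsum => i; rewrite /centered; ring.
by rewrite !inner_cvecl Hx Hy cvec_sum; field; lra.
Qed.

Lemma inner_Bi_Bo b v : inBi b -> inBo v -> inner b v >= alpha.
Proof.
move=> [Hb b2] [Hv v2]; change (sqnorm (centered v) <= ro2 d) in v2.
have := inner_ge_opp b2 v2 gap_gt0 (etrans gap_sqr (Rmult_comm _ _)).
by rewrite [inner b v]inner_centered //; lra.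
Qed.

Lemma cvec_Bi : inBi c.
Proof.
split; first exact: cvec_sum.
rewrite (_ : sqnorm _ = 0); first by have := ri2_gt0; lra.
by rewrite /sqnorm /inner (eq_Rsum (H := fun _ => 0)) ?Rsum_const => [|i]; rewrite /centered; ring.
Qed.

Lemma Bi_sub_Bo b : inBi b -> inBo b.
Proof. by move=> [Hb b2]; split=> //; have := ri2_le_ro2; rewrite -/(centered b); lra. Qed.

Lemma polar_Bi_sub_Bo u : inH u -> (forall b, inBi b -> inner u b >= alpha) -> inBo u.
Proof.
move=> Hu polar_u; split=> //; rewrite -/(centered u); have d2 := dR_ge2.
apply: Rnot_lt_le => outside; set W := sqnorm (centered u) in outside.
have Wr : 0 < W + ro2 d by have := ro2_gt0; lra.
(* a point of B_i on the ray from c opposite to u *)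
set l := 2 * (1 / (dR d * dR d) - alpha) / (W + ro2 d).
pose b : vec d := fun i => cvec i - l * centered u i.
have cb : forall i, centered b i = - l * centered u i by move=> i; rewrite /b /centered; ring.
have sq_l : forall s, inner (fun i => s * centered u i) (fun i => s * centered u i) = s * s * W.
  by move=> s; rewrite /W /sqnorm /inner -!Rsum_mull; apply: eq_Rsum => i; ring.
have Hb : inH b by rewrite /inH /b Rsum_sub Rsum_mull cvec_sum centered_sum //; ring.
have Bb : inBi b.
  split=> //; rewrite /sqnorm (eq_inner cb cb) sq_l.
  have -> : - l * - l * W = 4 * (ro2 d * ri2) * W / ((W + ro2 d) * (W + ro2 d)).
    by rewrite -gap_sqr /l; field; repeat split; nra.
  apply: (Rmult_le_reg_r ((W + ro2 d) * (W + ro2 d))); first nra.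
  rewrite /Rdiv Rmult_assoc Rinv_l ?Rmult_1_r; last nra.
  have := Rmult_le_pos _ _ (Rlt_le _ _ ri2_gt0) (Rle_0_sqr (W - ro2 d)).
  rewrite /Rsqr; lra.
have := polar_u b Bb; rewrite inner_centered // (eq_inner (fun i => erefl) cb).
have -> : inner (centered u) (fun i => - l * centered u i) = - l * W.
  by rewrite /W /sqnorm /inner -Rsum_mull; apply: eq_Rsum => i; ring.
have : l * W > 1 / (dR d * dR d) - alpha.
  have -> : l * W = (1 / (dR d * dR d) - alpha) * (2 * W / (W + ro2 d)).
    by rewrite /l; field; repeat split; nra.
  have : 2 * W / (W + ro2 d) > 1.
    apply: Rlt_gt; apply: (Rmult_lt_reg_r (W + ro2 d)) => //.
    by rewrite /Rdiv Rmult_assoc Rinv_l; lra.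
  have := gap_gt0; nra.
lra.
Qed.

Lemma sum0_coord_sqr (w : vec d) j :
  Rsum w = 0 -> w j * w j * (dR d * dR d) <= (dR d * dR d - 1) * sqnorm w.
Proof.
move=> w0; have d4 := dR_sqr_ge4; set n := dR d * dR d in d4 *.
set a := w j / (n - 1).
have shifted : Rsum (fun k => (w k + a) * (w k + a)) = sqnorm w + n * (a * a).
  rewrite (eq_Rsum (H := fun k => w k * w k + (2 * a * w k + a * a))); last by move=> k; ring.
  by rewrite !Rsum_add Rsum_mull Rsum_const w0 /sqnorm /inner -/n; ring.
have := Rsum_ge_term j (fun k => Rle_0_sqr (w k + a)); rewrite /Rsqr shifted.
have -> : w j + a = w j * n / (n - 1) by rewrite /a; field; lra.
move=> le_wj.
have le_wj' : w j * w j * n * n <= sqnorm w * ((n - 1) * (n - 1)) + n * (w j * w j).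
  have -> : w j * w j * n * n = w j * n / (n - 1) * (w j * n / (n - 1)) * ((n - 1) * (n - 1)).
    by field; lra.
  have -> : sqnorm w * ((n - 1) * (n - 1)) + n * (w j * w j) =
            (sqnorm w + n * (a * a)) * ((n - 1) * (n - 1)) by rewrite /a; field; lra.
  by apply: Rmult_le_compat_r; first nra.
apply: (Rmult_le_reg_r (n - 1)); first lra.
nra.
Qed.

Lemma Bi_sub_Delta b : inBi b -> inDelta b.
Proof.
move=> [Hb b2]; split=> // j; have d4 := dR_sqr_ge4.
have := sum0_coord_sqr j (centered_sum Hb); set n := dR d * dR d in d4 *.
have ri2E : (n - 1) * ri2 = 1 / n by rewrite /ri2 -/n; field; lra.
have : (n - 1) * sqnorm (centered b) <= 1 / n.
  by rewrite -ri2E; apply: Rmult_le_compat_l; lra.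
rewrite /centered /cvec -/n => le1 le2.
have : (b j - 1 / n) * (b j - 1 / n) <= 1 / n * (1 / n).
  apply: (Rmult_le_reg_r n); first lra.
  have -> : 1 / n * (1 / n) * n = 1 / n by field; lra.
  lra.
have : 0 < 1 / n by apply: Rdiv_lt_0_compat; lra.
nra.
Qed.

Definition vertex (k : 'I_(Defs.N d)) : vec d := fun j => if j == k then 1 / dR d else alpha.

Lemma inner_vertex p k : inner p (vertex k) = alpha * Rsum p + p k / (dR d + 1).
Proof.
have d2 := dR_ge2.
rewrite /inner (eq_Rsum (H := fun j => alpha * p j +
                           (if j == k then p k / (dR d + 1) else 0))).
  by rewrite Rsum_add Rsum_mull Rsum_delta.
by move=> j; rewrite /vertex; case: eqP => [->|_]; field; lra.
Qed.

Lemma vertex_sum k : inH (vertex k).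
Proof.
have d2 := dR_ge2.
rewrite /inH (eq_Rsum (H := fun j => alpha + (if j == k then 1 / (dR d + 1) else 0))).
  by rewrite Rsum_add Rsum_const Rsum_delta; field; lra.
by move=> j; rewrite /vertex; case: eqP => _; field; lra.
Qed.

Lemma vertex_Bo k : inBo (vertex k).
Proof.
split; first exact: vertex_sum.
have d2 := dR_ge2; rewrite -/(centered _) -/(sqnorm _).
have := inner_centered (vertex_sum k) (vertex_sum k).
rewrite inner_vertex vertex_sum /vertex eqxx /sqnorm /ro2 => e.
apply: Req_le; apply: (Rplus_eq_reg_l (1 / (dR d * dR d))); rewrite -e.
by field; lra.
Qed.

Lemma inner_Delta_vertex p k : inDelta p -> inner p (vertex k) >= alpha.
Proof.
move=> [p0 p1]; have d2 := dR_ge2; rewrite inner_vertex p1.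
have : 0 <= p k / (dR d + 1).
  by apply: Rmult_le_pos; [exact: p0 | apply/Rlt_le/Rinv_0_lt_compat; lra].
lra.
Qed.

Lemma polar_vertices_sub_Delta u :
  inH u -> (forall k, inner u (vertex k) >= alpha) -> inDelta u.
Proof.
move=> Hu polar_u; split=> // k; have d2 := dR_ge2.
have := polar_u k; rewrite inner_vertex Hu => ge.
have : 0 <= u k / (dR d + 1) by lra.
have : 0 < / (dR d + 1) by apply: Rinv_0_lt_compat; lra.
rewrite /Rdiv; nra.
Qed.

Definition homothety t x : vec d := fun i => (1 - t) * cvec i + t * x i.

Lemma homothety1 x : homothety 1 x = x.
Proof. by apply: functional_extensionality => i; rewrite /homothety; ring. Qed.

Lemma homothety_sum t x : inH x -> inH (homothety t x).
Proof.
move=> Hx; rewrite /inH /homothety Rsum_add (Rsum_mull (1 - t)) (Rsum_mull t) Hx.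
by rewrite cvec_sum; ring.
Qed.

Lemma inner_homothety t s x y : inH x -> inH y ->
  inner (homothety t x) (homothety s y) =
  1 / (dR d * dR d) + t * s * (inner x y - 1 / (dR d * dR d)).
Proof.
move=> Hx Hy.
rewrite (inner_centered (homothety_sum t Hx) (homothety_sum s Hy)) (inner_centered Hx Hy).
have -> : inner (centered (homothety t x)) (centered (homothety s y)) =
          t * s * inner (centered x) (centered y).
  by rewrite /inner -Rsum_mull; apply: eq_Rsum => i; rewrite /centered /homothety; ring.
ring.
Qed.

Section StochasticGroup.
Variable G : mat d -> Prop.
Hypothesis hG : subgroup_O G.
Hypothesis hst : stochastic G.
Implicit Types (A B : mat d).

Lemma G_mul A B : G A -> G B -> G (mmul A B).
Proof. by have [_ [_ [mulG _]]] := hG; exact: mulG. Qed.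

Lemma G_idm : G (@idm d).
Proof. by have [_ []] := hG. Qed.

Lemma G_fix_cvec A : G A -> mapply A c = c.
Proof. by move=> GA; apply: functional_extensionality; have [_] := hst GA. Qed.

Lemma G_colsum A j : G A -> Rsum (fun i => A i j) = 1.
Proof.
move=> GA; have d4 := dR_sqr_ge4.
have := f_equal (fun z : vec d => z j) (tapply_orthogonal c (hG.1 A GA)).
rewrite G_fix_cvec // /tapply /cvec Rsum_mulr => e.
apply: (Rmult_eq_reg_r (1 / (dR d * dR d))); first by rewrite e; ring.
by apply: Rgt_not_eq; apply: Rdiv_lt_0_compat; lra.
Qed.

Lemma G_rowsum A i : G A -> Rsum (fun j => A i j) = 1.
Proof.
move=> GA; have d4 := dR_sqr_ge4.
have := f_equal (fun z : vec d => z i) (G_fix_cvec GA).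
rewrite /mapply /cvec Rsum_mulr => e.
apply: (Rmult_eq_reg_r (1 / (dR d * dR d))); first by rewrite e; ring.
by apply: Rgt_not_eq; apply: Rdiv_lt_0_compat; lra.
Qed.

Lemma G_sum A x : G A -> Rsum (mapply A x) = Rsum x.
Proof.
move=> GA; rewrite /mapply Rsum_swap; apply: eq_Rsum => j.
by rewrite Rsum_mulr G_colsum //; ring.
Qed.

Lemma G_centered A x : G A -> centered (mapply A x) = mapply A (centered x).
Proof.
move=> GA; apply: functional_extensionality => i.
transitivity (mapply A (fun j => 1 * x j + -1 * cvec j) i).
  by rewrite mapply_linr G_fix_cvec //; rewrite /centered; ring.
by apply: eq_mapply => j; rewrite /centered; ring.
Qed.

Lemma G_homothety A t x : G A -> mapply A (homothety t x) = homothety t (mapply A x).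
Proof.
move=> GA; apply: functional_extensionality => i.
by rewrite /homothety mapply_linr G_fix_cvec.
Qed.

Lemma G_sqnorm_centered A x :
  G A -> sqnorm (centered (mapply A x)) = sqnorm (centered x).
Proof. by move=> GA; rewrite G_centered //; apply: orthogonal_inner; exact: hG.1. Qed.

Lemma G_Bo A x : G A -> inBo x -> inBo (mapply A x).
Proof.
move=> GA [Hx x2]; split; first by rewrite /inH G_sum.
by rewrite -/(centered _) -/(sqnorm _) G_sqnorm_centered.
Qed.

Lemma G_Bi A x : G A -> inBi x -> inBi (mapply A x).
Proof. by move=> GA [Hx x2]; split; [rewrite /inH G_sum | rewrite G_sqnorm_centered]. Qed.

Lemma G_vertex_Delta A k : G A -> inDelta (mapply A (vertex k)).
Proof.
move=> GA; split; last by rewrite G_sum //; exact: vertex_sum.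
move=> i; have d2 := dR_ge2.
change (mapply A (vertex k) i) with (inner (fun j => A i j) (vertex k)).
rewrite inner_vertex // G_rowsum //.
have dA : 0 <= 1 + dR d * A i k.
  have : - (1 / dR d) <= A i k by have [ge _] := hst GA; exact/Rge_le/ge.
  have : dR d * (- (1 / dR d)) = -1 by field; lra.
  nra.
rewrite (_ : _ + _ = (1 + dR d * A i k) / (dR d * (dR d + 1))); last by field; lra.
by apply: Rmult_le_pos => //; apply/Rlt_le/Rinv_0_lt_compat; nra.
Qed.

Lemma G_inverse A : G A ->
  exists2 B, G B & (forall x, mapply B (mapply A x) = x) /\ (forall x, mapply A (mapply B x) = x).
Proof.
move=> GA; have [_ [_ [_ Ginv]]] := hG.
have mapplyK C D : mat_eq (mmul C D) (@idm d) -> forall x, mapply C (mapply D x) = x.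
  move=> CD x; rewrite -mapply_mmul -[RHS]mapply_idm.
  by apply: functional_extensionality => i; apply: eq_Rsum => j; rewrite CD.
have [B [GB /mapplyK BA]] := Ginv A GA; have [C [GC /mapplyK CB]] := Ginv B GB.
exists B => //; split=> // x.
by rewrite -[LHS]CB BA CB.
Qed.

Lemma G_adjoint A : G A -> exists2 B, G B & forall x y, inner (mapply A x) y = inner x (mapply B y).
Proof.
move=> GA; have [B GB [_ AB]] := G_inverse GA.
exists B => // x y; rewrite -{1}[y]AB; exact: orthogonal_inner (hG.1 A GA).
Qed.

Implicit Types (K : set (vec d)) (T : mat d).

Definition admissible K :=
  [/\ forall u, K u -> inDelta u /\ inBo u,
      forall u v, K u -> K v -> inner u v >= alpha
    & forall A u, G A -> K u -> K (mapply A u)].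

Definition seed : set (vec d) :=
  fun u => inBi u \/ exists A k, G A /\ u = mapply A (vertex k).

Lemma admissible_inH K v : admissible K -> K v -> inH v.
Proof. by move=> [K_sub _ _] /K_sub [[_ ?] _]. Qed.

Lemma admissible_seed : admissible seed.
Proof.
have inner_Bi_orbit b A k : inBi b -> G A -> inner b (mapply A (vertex k)) >= alpha.
  by move=> Bb GA; apply: inner_Bi_Bo => //; apply: G_Bo => //; exact: vertex_Bo.
split.
- move=> u [Bu | [A [k [GA ->]]]]; first by split; [exact: Bi_sub_Delta | exact: Bi_sub_Bo].
  by split; [exact: G_vertex_Delta | apply: G_Bo => //; exact: vertex_Bo].
- move=> u v [Bu | [A [k [GA ->]]]] [Bv | [B [l [GB ->]]]].
  + by apply: inner_Bi_Bo => //; exact: Bi_sub_Bo.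
  + exact: inner_Bi_orbit.
  + by rewrite inner_sym; exact: inner_Bi_orbit.
  + have [A' GA' ->] := G_adjoint GA.
    rewrite inner_sym -mapply_mmul; apply: inner_Delta_vertex => //.
    by apply: G_vertex_Delta => //; exact: G_mul.
- move=> A u GA [Bu | [B [k [GB ->]]]]; first by left; exact: G_Bi.
  by right; exists (mmul A B), k; rewrite mapply_mmul; split=> //; exact: G_mul.
Qed.

Lemma admissible_bigcup (F : set (set (vec d))) :
  F `<=` admissible -> total_on F subset -> admissible (\bigcup_(X in F) X).
Proof.
move=> F_adm F_tot; split.
- by move=> u [X FX Xu]; have [sub _ _] := F_adm X FX; exact: sub.
- move=> u v [X FX Xu] [Y FY Yv].
  have [XY | YX] := F_tot X Y FX FY.
  + by have [_ pair _] := F_adm Y FY; apply: pair => //; exact: XY.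
  + by have [_ pair _] := F_adm X FX; apply: pair => //; exact: YX.
- by move=> A u GA [X FX Xu]; exists X => //; have [_ _ inv] := F_adm X FX; exact: inv.
Qed.

Lemma polar_seed_sub K u : seed `<=` K -> polar K u -> inDelta u /\ inBo u.
Proof.
move=> seedK [Hu polar_u]; split.
  apply: polar_vertices_sub_Delta => // k; apply: polar_u; apply: seedK.
  by right; exists (@idm d), k; rewrite mapply_idm; split=> //; exact: G_idm.
by apply: polar_Bi_sub_Bo => // b Bb; apply: polar_u; apply: seedK; left.
Qed.

Lemma polar_mapply K x A : admissible K -> polar K x -> G A -> polar K (mapply A x).
Proof.
move=> [_ _ K_inv] [Hx polar_x] GA; split; first by rewrite /inH G_sum.
by move=> v Kv; have [B GB ->] := G_adjoint GA; apply: polar_x; exact: K_inv.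
Qed.

Lemma polar_homothety K u t :
  (forall v, K v -> inH v) -> polar K u -> 0 <= t <= 1 -> polar K (homothety t u).
Proof.
move=> KH [Hu polar_u] t01; split; first exact: homothety_sum.
move=> v Kv; rewrite /homothety inner_linl inner_cvecl (KH v Kv).
have := polar_u v Kv; have := gap_gt0; nra.
Qed.

Definition orbit x : set (vec d) := fun y => exists2 A, G A & y = mapply A x.

Lemma admissible_setU_orbit K x : admissible K -> seed `<=` K -> polar K x ->
  (forall T, G T -> inner x (mapply T x) >= alpha) -> admissible (K `|` orbit x).
Proof.
move=> admK seedK polar_x orbit_x; have [K_sub K_pair K_inv] := admK.
have polar_orbit A : G A -> polar K (mapply A x) by exact: polar_mapply.
split.
- move=> u [Ku | [A GA ->]]; first exact: K_sub.
  by apply: (polar_seed_sub seedK); exact: polar_orbit.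
- have mixed u A : K u -> G A -> inner u (mapply A x) >= alpha.
    by move=> Ku GA; rewrite inner_sym; apply: (polar_orbit A GA).2.
  move=> u v [Ku | [A GA ->]] [Kv | [B GB ->]].
  + exact: K_pair.
  + exact: mixed.
  + by rewrite inner_sym; exact: mixed.
  + have [A' GA' ->] := G_adjoint GA.
    by rewrite -mapply_mmul; apply: orbit_x; exact: G_mul.
- move=> A u GA [Ku | [B GB ->]]; first by left; exact: K_inv.
  by right; exists (mmul A B); [exact: G_mul | rewrite mapply_mmul].
Qed.

Section MaximalAdmissible.
Variable K : set (vec d).
Hypotheses (admK : admissible K) (seedK : seed `<=` K).
Hypothesis maxK : forall K', admissible K' -> K `<=` K' -> K' `<=` K.

Lemma maximal_admissible_mem x :
  polar K x -> (forall T, G T -> inner x (mapply T x) >= alpha) -> K x.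
Proof.
move=> polar_x orbit_x; apply: (maxK (admissible_setU_orbit admK seedK polar_x orbit_x)).
  by move=> u Ku; left.
by right; exists (@idm d); [exact: G_idm | rewrite mapply_idm].
Qed.

Section PolarPoint.
Variable u : vec d.
Hypothesis polar_u : polar K u.
Local Notation excess T := (inner u (mapply T u) - 1 / (dR d * dR d)).

Let Hu : inH u. Proof. exact: polar_u.1. Qed.

Let TuH T : G T -> inH (mapply T u).
Proof. by move=> GT; rewrite /inH G_sum // Hu. Qed.

Let inv_succ_in01 : 0 < 1 / (dR d + 1) <= 1.
Proof.
have d2 := dR_ge2; split; first by apply: Rdiv_lt_0_compat; lra.
by rewrite /Rdiv Rmult_1_l -Rinv_1; apply: Rinv_le_contravar; lra.
Qed.

Lemma homothety_mem t : 0 <= t <= 1 ->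
  (forall T, G T -> 1 / (dR d * dR d) + t * t * excess T >= alpha) -> K (homothety t u).
Proof.
move=> t01 ge; apply: maximal_admissible_mem.
  by apply: polar_homothety => // v; exact: admissible_inH.
by move=> T GT; rewrite G_homothety // inner_homothety //; [exact: ge | exact: TuH].
Qed.

Lemma homothety_mem_ge t T :
  K (homothety t u) -> G T -> 1 / (dR d * dR d) + t * excess T >= alpha.
Proof.
move=> Kt GT; have [_ _ K_inv] := admK; have := polar_u.2 _ (K_inv T _ GT Kt).
rewrite G_homothety // -{1}(homothety1 u) inner_homothety //; last exact: TuH.
by rewrite Rmult_1_l.
Qed.

Lemma homothety_mem_sqrt t : 0 < t <= 1 -> K (homothety t u) -> K (homothety (sqrt t) u).
Proof.
move=> t01 Kt; apply: homothety_mem.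
  by split; [exact: sqrt_pos | rewrite -sqrt_1; apply: sqrt_le_1_alt; lra].
by move=> T GT; rewrite sqrt_sqrt; [exact: homothety_mem_ge | lra].
Qed.

Lemma homothety_mem_inv_succ : K (homothety (1 / (dR d + 1)) u).
Proof.
have d2 := dR_ge2; apply: homothety_mem; first by have := inv_succ_in01; lra.
move=> T GT; have : 0 <= inner u (mapply T u).
  have [[u_ge0 _] _] := polar_seed_sub seedK polar_u.
  have [[Tu_ge0 _] _] := polar_seed_sub seedK (polar_mapply admK polar_u GT).
  by apply: Rsum_ge0 => i; apply: Rmult_le_pos.
have : 1 / (dR d * dR d) * (1 - 1 / (dR d + 1) * (1 / (dR d + 1))) - alpha =
       1 / (dR d * (dR d + 1) * (dR d + 1)) by field; lra.
have : 0 < 1 / (dR d * (dR d + 1) * (dR d + 1)) by apply: Rdiv_lt_0_compat; nra.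
nra.
Qed.

Lemma excess_ge T : G T -> alpha - 1 / (dR d * dR d) <= excess T.
Proof.
move=> GT; have d2 := dR_ge2; have gap := gap_gt0.
have [neg | ] := Rlt_or_le (excess T) 0; last lra.
suff ge1 : 1 <= (1 / (dR d * dR d) - alpha) / - excess T.
  have := Rmult_le_compat_r (- excess T) _ _ ltac:(lra) ge1.
  by rewrite /Rdiv Rmult_assoc Rinv_l; lra.
apply: (@sqrt_closed_ub_ge1 (fun t => 0 < t <= 1 /\ K (homothety t u)) (1 / (dR d + 1))).
- exact: inv_succ_in01.1.
- by split; [exact: inv_succ_in01 | exact: homothety_mem_inv_succ].
- by move=> t [[? _] _]; lra.
- move=> t [t01 Kt]; split; last exact: homothety_mem_sqrt.
  by split; [apply: sqrt_lt_R0; lra | rewrite -sqrt_1; apply: sqrt_le_1_alt; lra].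
- move=> t [_ Kt]; apply: (Rmult_le_reg_r (- excess T)); first lra.
  by rewrite /Rdiv Rmult_assoc Rinv_l; have := homothety_mem_ge Kt GT; lra.
Qed.

Lemma maximal_admissible_self_polar : K u.
Proof.
rewrite -(homothety1 u); apply: homothety_mem; first lra.
by move=> T GT; have := excess_ge GT; lra.
Qed.

End PolarPoint.

End MaximalAdmissible.

(* Solves A = (d+1) r - (row sums of r)/d, the row sums of r being 1. *)
Definition measurement_of A : mat d := fun i j => (A i j + 1 / dR d) / (dR d + 1).

Lemma measurement_ofE A i j :
  measurement_of A i j = 1 / (dR d + 1) * A i j + 1 / (dR d * (dR d + 1)).
Proof. by have := dR_ge2; rewrite /measurement_of => d2; field; lra. Qed.

Lemma measurement_of_rowsum A i : G A -> Rsum (fun j => measurement_of A i j) = 1.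
Proof.
move=> GA; have d2 := dR_ge2.
rewrite (eq_Rsum (measurement_ofE A i)) Rsum_add Rsum_mull G_rowsum // Rsum_const.
by field; lra.
Qed.

Lemma measurement_of_G A : G A -> measurement (measurement_of A).
Proof.
move=> GA; have d2 := dR_ge2; split.
  move=> i j; rewrite /measurement_of; apply: Rmult_le_pos.
    by have [ge _] := hst GA; have := ge i j; lra.
  by apply/Rlt_le/Rinv_0_lt_compat; lra.
move=> j; rewrite (eq_Rsum (fun i => measurement_ofE A i j)) Rsum_add Rsum_mull G_colsum //.
by rewrite Rsum_const; field; lra.
Qed.

Lemma stretched_measurement_of A i j : G A -> stretched (measurement_of A) i j = A i j.
Proof.
move=> GA; have d2 := dR_ge2.
by rewrite /stretched measurement_of_rowsum // /measurement_of; field; lra.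
Qed.

Lemma q_r_measurement_of A q : G A -> inH q -> q_r (measurement_of A) q = mapply A q.
Proof.
move=> GA Hq; have d2 := dR_ge2; apply: functional_extensionality => i.
rewrite /q_r /mapply (eq_Rsum (H := fun j => A i j * q j + (1 / dR d * q j +
         (- (1 / (dR d * (dR d + 1))) * A i j + - (1 / (dR d * dR d * (dR d + 1))))))).
  by rewrite !Rsum_add !Rsum_mull Rsum_const Hq G_rowsum //; field; lra.
by move=> j; rewrite /measurement_of; field; lra.
Qed.

Lemma G_presgroup K A : (forall u, K u -> inH u) ->
  (forall B u, G B -> K u -> K (mapply B u)) -> G A -> in_presgroup K A.
Proof.
move=> KH K_inv GA; exists (measurement_of A); split; first exact: measurement_of_G.
split; last by move=> i j; rewrite stretched_measurement_of.
move=> p; split.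
  move=> [q [Kq pq]]; rewrite (functional_extensionality _ _ pq).
  by rewrite q_r_measurement_of //; [exact: K_inv | exact: KH].
move=> Kp; have [B GB [_ AB]] := G_inverse GA.
exists (mapply B p); split; first exact: K_inv.
by move=> i; rewrite q_r_measurement_of // ?AB //; apply: KH; exact: K_inv.
Qed.

End StochasticGroup.

End Qplex.

(* Importing Reals rebinds %N to binary naturals; the statement means nat. *)
Delimit Scope nat_scope with N.

Theorem mainTheorem14 (d : nat) (hd : (2 <= d)%N) (G : mat d -> Prop)
  (hG : subgroup_O G) (hst : stochastic G) :
  exists Q : vec d -> Prop, qplex Q /\ forall S, G S -> in_presgroup Q S.
Proof.
have [K [admK seedK maxK]] : exists K,
    [/\ admissible G K, seed G `<=` K & forall K', admissible G K' -> K `<=` K' -> K' `<=` K].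
  apply: (@Zorn_bigcup_above _ (admissible G) (seed G)).
  - by exists (@cvec d); left; exact: cvec_Bi.
  - exact: admissible_seed.
  - by move=> F _; exact: admissible_bigcup.
have [K_sub K_pair K_inv] := admK.
have KH u : K u -> inH u by exact: admissible_inH admK.
exists K; split; last by move=> S; exact: G_presgroup KH K_inv.
split=> // u; split; first exact: (maximal_admissible_self_polar hd hG hst admK seedK maxK).
by move=> Ku; split; [exact: KH | move=> v Kv; exact: K_pair].
Qed.
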